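(* There are no semi-equivelar maps of types $(3^4,4^2)$ or $(3,4^4)$ on the closed surface of Euler characteristic $-1$. *)

From HB Require Import structures.
From mathcomp Require Import all_boot all_order all_algebra.
Set Implicit Arguments. Unset Strict Implicit. Unset Printing Implicit Defensive.

(* A map with vertex set 'I_n is given by its list of faces; each face is
   a cyclic sequence of vertices (its boundary cycle). *)
Section Maps.
Variable n : nat.
Implicit Types (f : seq 'I_n) (F : seq (seq 'I_n)) (u v w : 'I_n).

Definition face_edge f u v : bool :=
  ((u, v) \in zip f (rot 1 f)) || ((v, u) \in zip f (rot 1 f)).

Definition face_of F (i : nat) : seq 'I_n := nth [::] F i.

Definition map_edge F u v : bool := has (fun f => face_edge f u v) F.

Definition edge_set F : {set 'I_n * 'I_n} :=
  [set p : 'I_n * 'I_n | (p.1 < p.2)%N && map_edge F p.1 p.2].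

Definition euler_char F : int :=
  (n%:Z - (#|edge_set F|)%:Z + (size F)%:Z)%R.

Definition face_cycle_at F v (s : seq nat) : Prop :=
  [/\ uniq s, (3 <= size s)%N,
      (forall i, i \in s <-> (i < size F)%N /\ v \in face_of F i) &
      (forall k, (k < size s)%N ->
         exists w, face_edge (face_of F (nth 0 s k)) v w &&
                   face_edge (face_of F (nth 0 s (k.+1 %% size s))) v w)].

(* polyhedral map on a closed surface (combinatorial description):
   faces are polygons (cycles of >= 3 distinct vertices), two distinct faces
   meet in the empty set, a vertex or an edge, each edge lies in exactly two
   faces, and the faces around each vertex form a single cycle. *)
Definition polyhedral_map F : Prop :=
  [/\ (forall i, (i < size F)%N -> uniq (face_of F i) /\ (3 <= size (face_of F i))%N),
      (forall i j, (i < j < size F)%N ->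
         let c := [seq x <- face_of F i | x \in face_of F j] in
         (size c <= 1)%N \/
         (exists x y, c = [:: x; y] /\ face_edge (face_of F i) x y
                                     /\ face_edge (face_of F j) x y)),
      (forall u v, map_edge F u v -> count (fun f => face_edge f u v) F = 2) &
      (forall v, exists s, face_cycle_at F v s)].

Definition map_connected F : Prop :=
  forall u v, connect (fun x y => map_edge F x y) u v.

Definition has_vertex_type F v (t : seq nat) : Prop :=
  exists s, face_cycle_at F v s /\
    exists r, [seq size (face_of F i) | i <- s] = rot r t \/
              [seq size (face_of F i) | i <- s] = rot r (rev t).

Definition semi_equivelar F (t : seq nat) : Prop :=
  forall v, has_vertex_type F v t.
End Maps.

(* The proof is pure double counting.  Write V = n, E, F for the numbers of
   vertices, edges and faces, and f_k for the number of k-gonal faces.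
   - Every face is a polygon with at least as many edges as vertices and
     every edge lies in exactly two faces, so  sum_faces |face| <= 2E.
   - Counting incidences (vertex, k-gon), a semi-equivelar map of type t
     satisfies  V * (#k in t) = k * f_k.
   - Since the edges are pairs of distinct vertices,  2E + V <= V^2.
   - Two distinct faces share at most two vertices, hence
     sum_v (#k-gons at v)^2 <= f_k * (2 f_k + k - 2).
   Combined with V - E + F = -1, type (3^4, 4^2) forces V <= 6 from the
   first two facts and V >= 7 from the third; type (3, 4^4) forces V <= 6
   while the fourth (with k = 4) forces V >= 7. *)
From HB Require Import structures.
From mathcomp Require Import all_boot all_order all_algebra.
From mathcomp Require Import zify.
Set Implicit Arguments. Unset Strict Implicit. Unset Printing Implicit Defensive.

Lemma sum_nat_bool (T : Type) (s : seq T) (P b : pred T) :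
  \sum_(i <- s | P i) (b i : nat) = count (fun i => P i && b i) s.
Proof.
elim: s => [|x s IH]; first by rewrite big_nil.
by rewrite big_cons /= IH; case: (P x); case: (b x).
Qed.

Lemma count_sum (T : Type) (s : seq T) (b : pred T) :
  count b s = \sum_(i <- s) (b i : nat).
Proof. by rewrite sum_nat_bool. Qed.

Lemma sum_bool_card (T : finType) (P : pred T) : \sum_(v : T) (P v : nat) = #|P|.
Proof.
rewrite -sum1_card [RHS]big_mkcond; apply: eq_bigr => v _.
by rewrite /in_mem /=; case: (P v).
Qed.

(* The k-cyclic successor j |-> j+1 mod k is not an involution when k > 2;
   this is why a polygon has as many edges as vertices. *)
Lemma succ_mod_antisym k i j : 2 < k -> i < k -> j < k ->
  i = j.+1 %% k -> j = i.+1 %% k -> False.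
Proof.
move=> k_gt2 ik jk.
have succ_mod m : m < k -> m.+1 %% k = if m.+1 < k then m.+1 else 0.
  move=> mk; case: ltnP => [|mk']; first exact: modn_small.
  have -> : m.+1 = k by lia.
  by rewrite modnn.
by rewrite !succ_mod //; do 2 case: ifP; lia.
Qed.

Lemma nth_rot1 (T : Type) (x0 : T) (s : seq T) j :
  j < size s -> nth x0 (rot 1 s) j = nth x0 s (j.+1 %% size s).
Proof.
case: s => [//|x s] /= js; rewrite rot1_cons nth_rcons.
case: ltnP => [j_lt|j_ge]; first by rewrite modn_small.
have -> : j = size s by lia.
by rewrite eqxx modnn.
Qed.

Definition upair n (x y : 'I_n) : 'I_n * 'I_n :=
  if (x < y)%N then (x, y) else (y, x).

Lemma upair_eq n (a b c d : 'I_n) :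
  upair a b = upair c d -> (a = c /\ b = d) \/ (a = d /\ b = c).
Proof. by rewrite /upair; do 2 case: ifP => _; case=> -> ->; auto. Qed.

Lemma face_edgeC n (f : seq 'I_n) u v : face_edge f u v = face_edge f v u.
Proof. by rewrite /face_edge orbC. Qed.

(* A polygon with k >= 3 distinct vertices has (at least) k edges: the
   consecutive pairs of its boundary cycle are pairwise distinct. *)
Lemma face_edges_card n (f : seq 'I_n) : uniq f -> 2 < size f ->
  size f <= #|[set p : 'I_n * 'I_n | (p.1 < p.2)%N && face_edge f p.1 p.2]|.
Proof.
case: f => [//|x0 s] uf f_gt2; set f := x0 :: s in uf f_gt2 *; set k := size f.
pose a (j : 'I_k) := nth x0 f j.
pose b (j : 'I_k) := nth x0 f (j.+1 %% k).
pose g (j : 'I_k) := upair (a j) (b j).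
have succ_lt (j : nat) : j.+1 %% k < k by rewrite ltn_mod.
have nth_inj i j : i < k -> j < k -> nth x0 f i = nth x0 f j -> i = j.
  by move=> ik jk /eqP; rewrite nth_uniq // => /eqP.
have ab_neq j : a j != b j.
  apply/eqP => /(nth_inj _ _ (ltn_ord j) (succ_lt j)) e.
  exact: (succ_mod_antisym f_gt2 (ltn_ord j) (ltn_ord j) e e).
have g_inj : injective g.
  move=> i j /upair_eq [[ea eb]|[ea eb]]; apply: val_inj.
    exact: nth_inj _ _ (ltn_ord i) (ltn_ord j) ea.
  exfalso; apply: (succ_mod_antisym f_gt2 (ltn_ord i) (ltn_ord j)).
    exact: nth_inj _ _ (ltn_ord i) (succ_lt j) ea.
  exact: esym (nth_inj _ _ (succ_lt i) (ltn_ord j) eb).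
have ab_edge j : face_edge f (a j) (b j).
  apply/orP; left.
  have -> : (a j, b j) = nth (x0, x0) (zip f (rot 1 f)) j.
    by rewrite nth_zip ?size_rot // nth_rot1.
  by apply: mem_nth; rewrite size_zip size_rot minnn.
rewrite -{1}(card_ord k) -cardsT -(card_imset _ g_inj).
apply: subset_leq_card; apply/subsetP => p /imsetP [j _ ->]; rewrite inE.
rewrite /g /upair; case: (ltnP (a j) (b j)) => [ab|ba] /=; first by rewrite ab ab_edge.
rewrite face_edgeC ab_edge andbT ltn_neqAle ba andbT.
by apply: contra (ab_neq j) => /eqP e; apply/eqP/val_inj.
Qed.

Lemma card_increasing_pairs n :
  2 * #|[set p : 'I_n * 'I_n | (p.1 < p.2)%N]| + n <= n * n.
Proof.
set A := [set p : 'I_n * 'I_n | (p.1 < p.2)%N].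
have cardA : #|A| = \sum_(p : 'I_n * 'I_n) ((p.1 < p.2)%N : nat).
  by rewrite (sum_bool_card (fun p : 'I_n * 'I_n => (p.1 < p.2)%N));
     apply: eq_card => p; rewrite inE.
have cardA_swap : #|A| = \sum_(p : 'I_n * 'I_n) ((p.2 < p.1)%N : nat).
  rewrite cardA (reindex_inj (h := fun p : 'I_n * 'I_n => (p.2, p.1))) //.
  by case=> x y [z w] [-> ->].
have diag_ge : n <= \sum_(p : 'I_n * 'I_n) ((p.1 == p.2) : nat).
  rewrite (sum_bool_card (fun p : 'I_n * 'I_n => p.1 == p.2)).
  have diag_inj : injective (fun x : 'I_n => (x, x)) by move=> x y [].
  rewrite -{1}(card_ord n) -cardsT -(card_imset _ diag_inj).
  by apply: subset_leq_card; apply/subsetP => p /imsetP [x _ ->]; rewrite unfold_in /=.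
have trichotomy : \sum_(p : 'I_n * 'I_n) (((p.1 < p.2)%N : nat)
    + ((p.2 < p.1)%N : nat) + ((p.1 == p.2) : nat)) = n * n.
  rewrite (eq_bigr (fun _ => 1)); last first.
    by move=> [x y] _ /=; rewrite -(inj_eq val_inj) /=; case: ltngtP.
  by rewrite sum1_card card_prod card_ord.
rewrite !big_split /= -cardA -cardA_swap in trichotomy.
by rewrite -trichotomy mul2n -addnn leq_add2l.
Qed.

Section Counting.

Variables (n : nat) (F : seq (seq 'I_n)).

Definition nfaces k : nat :=
  count (fun i => size (face_of F i) == k) (iota 0 (size F)).

Definition faces_at k (v : 'I_n) : nat :=
  count (fun i => (size (face_of F i) == k) && (v \in face_of F i))
        (iota 0 (size F)).

(* Edges are pairs of distinct vertices, so 2E <= V^2 - V. *)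
Lemma edges_vertices_bound : 2 * #|edge_set F| + n <= n * n.
Proof.
apply: leq_trans (card_increasing_pairs n); rewrite leq_add2r leq_mul2l /=.
by apply: subset_leq_card; apply/subsetP => p; rewrite !inE => /andP [].
Qed.

Hypothesis PM : polyhedral_map F.

Lemma face_uniq i : i < size F -> uniq (face_of F i).
Proof. by case: PM => face_ok _ _ _ /face_ok []. Qed.

Lemma face_size_gt2 i : i < size F -> 2 < size (face_of F i).
Proof. by case: PM => face_ok _ _ _ /face_ok []. Qed.

(* Each face contributes its size to the edge-face incidences, and each
   edge has exactly two of them. *)
Lemma face_sizes_le_edges :
  \sum_(i <- iota 0 (size F)) size (face_of F i) <= 2 * #|edge_set F|.
Proof.
case: PM => _ _ two_faces _.
have -> : 2 * #|edge_set F| =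
    \sum_(p in edge_set F) count (fun f => face_edge f p.1 p.2) F.
  rewrite (eq_bigr (fun _ => 2)); first by rewrite sum_nat_const mulnC.
  by move=> p; rewrite inE => /andP [_ /two_faces].
rewrite (eq_bigr (fun p => \sum_(f <- F) (face_edge f p.1 p.2 : nat)));
  last by move=> p _; rewrite count_sum.
rewrite exchange_big /= [X in _ <= X](big_nth [::]).
rewrite /index_iota subn0 big_seq [X in _ <= X]big_seq; apply: leq_sum => i.
rewrite mem_iota add0n => /= iF.
apply: leq_trans (face_edges_card (face_uniq iF) (face_size_gt2 iF)) _.
rewrite -sum1_card [X in X <= _]big_mkcond [X in _ <= X]big_mkcond /=.
apply: leq_sum => p _; rewrite !inE /face_of.
case: (p.1 < p.2)%N => //=; case fe: (face_edge _ p.1 p.2) => //=.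
suff -> : map_edge F p.1 p.2 by [].
by apply/hasP; exists (nth [::] F i); rewrite ?mem_nth.
Qed.

(* Double counting of the incidences (vertex, k-gon). *)
Lemma sum_faces_at k : \sum_(v : 'I_n) faces_at k v = k * nfaces k.
Proof.
under eq_bigr do rewrite /faces_at -sum_nat_bool.
rewrite exchange_big /= big_seq_cond (eq_bigr (fun _ => k)); last first.
  move=> i; rewrite mem_iota add0n /= => /andP [iF /eqP <-].
  by rewrite (sum_bool_card (fun v => v \in face_of F i)) (card_uniqP (face_uniq iF)).
by rewrite -big_seq_cond big_const_seq iter_addn_0 mulnC.
Qed.

Lemma face_meet_card i j : i < size F -> j < size F -> i != j ->
  #|[pred v | (v \in face_of F i) && (v \in face_of F j)]| <= 2.
Proof.
case: PM => _ meet _ _.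
wlog ij : i j / i < j.
  move=> W iF jF neq; case: (ltngtP i j) => [ij|ji|eq]; first exact: W.
    apply: leq_trans (W j i ji jF iF _); last by rewrite eq_sym.
    by apply/eq_leq/eq_card => v; rewrite !inE andbC.
  by rewrite eq eqxx in neq.
move=> iF jF _.
have common_le2 : size [seq x <- face_of F i | x \in face_of F j] <= 2.
  have /= := meet i j; rewrite ij jF => /(_ isT) [c_le1|[x [y [-> _]]]] //.
  exact: leq_trans c_le1 _.
apply: leq_trans common_le2; apply: leq_trans (card_size _).
by apply/eq_leq/eq_card => v; rewrite mem_filter andbC.
Qed.

(* Second moment of the number of k-gons at a vertex: expanding the square
   counts pairs of k-gons through v; a k-gon meets itself in k vertices and
   any other face in at most two. *)
Lemma sum_sq_faces_at k :
  \sum_(v : 'I_n) faces_at k v ^ 2 <= nfaces k * (2 * nfaces k + (k - 2)).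
Proof.
rewrite /nfaces; set I := iota 0 (size F); set fk := count _ I.
have meet_bound i j : i \in I -> j \in I -> size (face_of F i) == k ->
    \sum_(v : 'I_n) ((v \in face_of F i) * (v \in face_of F j))
      <= 2 + (k - 2) * (j == i).
  rewrite !mem_iota !add0n /= => iF jF /eqP ki.
  under eq_bigr do rewrite mulnb.
  case: eqP => [->|ji].
    under eq_bigr do rewrite andbb.
    rewrite (sum_bool_card (fun v => v \in face_of F i)).
    by rewrite (card_uniqP (face_uniq iF)) ki muln1; lia.
  rewrite (sum_bool_card (fun v => (v \in face_of F i) && (v \in face_of F j))).
  by rewrite muln0 addn0 face_meet_card // eq_sym; apply/eqP.
under eq_bigr do rewrite -mulnn /faces_at -sum_nat_bool big_distrlr /=.
rewrite exchange_big /=; under eq_bigr do rewrite exchange_big /=.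
rewrite {1}/fk -sum1_count big_distrl /= big_seq_cond [X in _ <= X]big_seq_cond.
apply: leq_sum => i /andP [iI ki]; rewrite mul1n.
apply: leq_trans (_ : \sum_(j <- I | size (face_of F j) == k)
                         (2 + (k - 2) * (j == i)) <= _).
  rewrite big_seq_cond [X in _ <= X]big_seq_cond; apply: leq_sum => j /andP [jI _].
  exact: meet_bound.
rewrite big_split /= big_const_seq iter_addn_0 -/fk -big_distrr /= leq_add2l.
rewrite -[X in _ <= X]muln1 leq_mul2l sum_nat_bool; apply/orP; right.
apply: leq_trans (_ : count (pred1 i) I <= 1).
  by apply: sub_count => j /= /andP [_ /eqP ->].
by rewrite count_uniq_mem ?iota_uniq // leq_b1.
Qed.

Section SemiEquivelar.

Variable t : seq nat.
Hypothesis SE : semi_equivelar F t.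

(* Around every vertex the faces are listed by the type t, up to rotation
   and reversal, so the number of k-gons at v is the multiplicity of k in t. *)
Lemma faces_at_type k v : faces_at k v = count_mem k t.
Proof.
have [s [[s_uniq _ s_mem _] [r s_type]]] := SE v.
have s_faces : perm_eq s [seq i <- iota 0 (size F) | v \in face_of F i].
  apply: uniq_perm => //; first by rewrite filter_uniq // iota_uniq.
  move=> i; rewrite mem_filter mem_iota add0n /=.
  by apply/idP/idP => [/s_mem [-> ->]|/andP [iF vi]] //; apply/s_mem.
rewrite /faces_at -count_filter -(permP s_faces).
rewrite -(count_map (fun i => size (face_of F i)) (pred1 k)).
by apply/permP; case: s_type => ->; rewrite perm_rot ?perm_rev.
Qed.

Lemma face_size_in_type i : i < size F -> size (face_of F i) \in t.
Proof.
move=> iF; have := face_size_gt2 iF.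
case e : (face_of F i) => [//|v rest] _.
have [s [[_ _ s_mem _] [r s_type]]] := SE v.
have i_s : i \in s by apply/s_mem; rewrite e inE eqxx.
have := map_f (fun i => size (face_of F i)) i_s.
by rewrite e; case: s_type => ->; rewrite mem_rot ?mem_rev.
Qed.

Lemma nfaces_type k : n * count_mem k t = k * nfaces k.
Proof.
rewrite -sum_faces_at (eq_bigr (fun _ => count_mem k t)) ?sum_nat_const ?card_ord //.
by move=> v _; rewrite faces_at_type.
Qed.

Hypothesis t_34 : all (fun k => k \in [:: 3; 4]) t.

Lemma face_size_34 i : i \in iota 0 (size F) ->
  (size (face_of F i) == 3) || (size (face_of F i) == 4).
Proof.
rewrite mem_iota add0n => /face_size_in_type.
by move/allP: t_34 => t_sub /t_sub; rewrite !inE.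
Qed.

Lemma size_faces_34 : size F = nfaces 3 + nfaces 4.
Proof.
rewrite /nfaces -{1}(size_iota 0 (size F)) -(count_predC (fun i => size (face_of F i) == 3)).
by congr (_ + _); apply: eq_in_count => i /face_size_34 /=; case/orP => /eqP ->.
Qed.

Lemma incidences_34_le_edges : 3 * nfaces 3 + 4 * nfaces 4 <= 2 * #|edge_set F|.
Proof.
apply: leq_trans face_sizes_le_edges.
rewrite (eq_big_seq (fun i => 3 * (size (face_of F i) == 3)
                             + 4 * (size (face_of F i) == 4))).
  by rewrite big_split /= -!big_distrr /= -!count_sum.
by move=> i /face_size_34; case/orP => /eqP ->.
Qed.

End SemiEquivelar.

End Counting.

(* With E = V + F + 1, the counting identities give V <= 6, while the pair
   bound (type (3^4, 4^2)) or the second-moment bound for squares (type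
   (3, 4^4)) gives V >= 7. *)
Theorem mainTheorem11 (n : nat) (F : seq (seq 'I_n)) :
  polyhedral_map F -> map_connected F -> euler_char F = (-1)%R ->
  ~ semi_equivelar F [:: 3; 3; 3; 3; 4; 4] /\ ~ semi_equivelar F [:: 3; 4; 4; 4; 4].
Proof.
move=> PM _ euler.
have edges : #|edge_set F| = n + size F + 1 by move: euler; rewrite /euler_char; lia.
have pairs := edges_vertices_bound F.
have counts t : semi_equivelar F t -> all (fun k => k \in [:: 3; 4]) t ->
  [/\ size F = nfaces F 3 + nfaces F 4, n * count_mem 3 t = 3 * nfaces F 3,
      n * count_mem 4 t = 4 * nfaces F 4 &
      3 * nfaces F 3 + 4 * nfaces F 4 <= 2 * #|edge_set F|].
  by move=> SE t_34; split; [apply: size_faces_34 | apply: nfaces_type.. |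
                             apply: incidences_34_le_edges].
split=> SE; have [size_F f3 f4 incid] := counts _ SE isT; move: f3 f4 => /= f3 f4.
  nia.
have := sum_sq_faces_at PM 4; under eq_bigr do rewrite (faces_at_type SE).
rewrite sum_nat_const card_ord /=; nia.
Qed.
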